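(* Consider a sequence of problems indexed by $n$ with a fixed integer $m\ge1$, a support set $\mathcal{S}\subseteq\{1,\dots,n\}$ of size $s=s(n)$, a fixed rate $\theta_1>0$ and a rate $\theta_0=\theta_0(n)>\theta_1$. Observations of component $i$ are i.i.d. $\mathrm{Poisson}(\theta_0)$ if $i\notin\mathcal{S}$ and i.i.d. $\mathrm{Poisson}(\theta_1)$ if $i\in\mathcal{S}$, independent across components and draws. Run (reversed) sequential thresholding with $K=(1+\epsilon)\log_2 n$ passes, $\epsilon>0$: set $\mathcal{S}_0=\{1,\dots,n\}$; for $k=1,\dots,K$, for each $i\in\mathcal{S}_{k-1}$ take $m$ fresh observations, compute $T^{(k)}_{i,m}=\sum_{j=1}^m y^{(k)}_{i,j}$, and set $\mathcal{S}_k=\{i\in\mathcal{S}_{k-1}:T^{(k)}_{i,m}<\mathrm{median}(\mathrm{Poisson}(m\theta_0))\}$. If $\theta_0>\frac{\log(s\log_2 n)+1}{m}$, then sequential thresholding is reliable, i.e. $\lim_{n\to\infty}\mathbb{P}(\mathcal{S}_K\neq\mathcal{S})=0$.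
   Context: A support estimator $\widehat{\mathcal{S}}(n)$ is reliable if $\lim_{n\to\infty}\mathbb{P}(\widehat{\mathcal{S}}(n)\neq\mathcal{S}(n))=0$. The inequality on $\theta_0$ is understood as a condition on the growth of $\theta_0(n)$ with $n$. *)

From HB Require Import structures.
From mathcomp Require Import all_boot all_order all_algebra.
From mathcomp Require Import all_classical all_reals all_analysis.
Set Implicit Arguments. Unset Strict Implicit. Unset Printing Implicit Defensive.
Import Order.TTheory GRing.Theory Num.Theory.
Local Open Scope classical_set_scope.
Local Open Scope ring_scope.

Section SeqThresh.
Variable R : realType.

(* Outcome of the experiment: all observations y^{(k)}_{i,j} for component
   i < n, pass k < K, draw j < m (all drawn up front; pass k only uses the
   observations of components still alive, which is the same as taking
   fresh observations). *)
Definition obs_space (n K m : nat) := {ffun 'I_n * 'I_K * 'I_m -> nat}.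

Definition stat (n K m : nat) (y : obs_space n K m) (i : 'I_n) (k : 'I_K) : nat :=
  (\sum_(j < m) y (i, k, j))%N.

Definition seq_thresh (n K m : nat) (y : obs_space n K m) (thr : nat) : {set 'I_n} :=
  foldl (fun (S : {set 'I_n}) (k : 'I_K) => [set i in S | (stat y i k < thr)%N])
        [set: 'I_n]%SET (enum 'I_K).

Definition comp_rate (n : nat) (th0 th1 : R) (S : {set 'I_n}) (i : 'I_n) : R :=
  if i \in S then th1 else th0.

Definition obs_pmf (n K m : nat) (th0 th1 : R) (S : {set 'I_n})
  (y : obs_space n K m) : R :=
  \prod_(t : 'I_n * 'I_K * 'I_m) poisson_pmf (comp_rate th0 th1 S t.1.1) (y t).

Definition error_prob (n K m : nat) (th0 th1 : R) (S : {set 'I_n}) (thr : nat)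
  : \bar R :=
  \esum_(y in [set y : obs_space n K m | seq_thresh y thr != S])
     (obs_pmf th0 th1 S y)%:E.

Definition is_poisson_median (lam : R) (M : nat) : Prop :=
  1 / 2 <= \sum_(k < M.+1) poisson_pmf lam k /\
  1 / 2 <= 1 - \sum_(k < M) poisson_pmf lam k.

Definition log2 (x : R) : R := ln x / ln 2.

Definition passes (eps : R) (n : nat) : nat :=
  `|Num.ceil ((1 + eps) * log2 n%:R)|%N.

End SeqThresh.

From HB Require Import structures.
From mathcomp Require Import all_boot all_order all_algebra.
From mathcomp Require Import all_classical all_reals all_analysis.
From mathcomp Require Import ring lra.
Set Implicit Arguments. Unset Strict Implicit. Unset Printing Implicit Defensive.
Import Order.TTheory GRing.Theory Num.Theory.
Local Open Scope classical_set_scope.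
Local Open Scope ring_scope.

(* A support component is lost if its statistic reaches the
   threshold M in one of the K passes; a Chernoff bound with z = e^3 bounds
   this by C e^(-3M) per pass, with C depending only on m and th1.  An
   off-support component survives a pass with probability
   P(Poisson(m th0) < M) <= 1/2, so it survives all passes with probability
   at most 2^(-K), and n 2^(-K) <= n^(-eps).  The other half of the median
   property, P(Poisson(m th0) <= M) >= 1/2, combined with a Chernoff bound at
   z = 1/e, gives e^(-M) <= 2 e^(-m th0 / 2); by the rate assumption,
   e^(-3M) = O((s log2 n)^(-3/2)).  The union bound therefore gives
   P(S_K <> S) = O((log2 n)^(-1/2) + n^(-eps)). *)

Section PoissonBounds.
Variable R : realType.

Lemma expR_ge_partial_sum (x : R) N :
  0 <= x -> \sum_(k < N) x ^+ k / k`!%:R <= expR x.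
Proof.
move=> x_ge0.
have := nondecreasing_cvgn_le _ (is_cvg_series_exp_coeff x) N.
rewrite /series /= big_mkord; apply.
apply: nondecreasing_series => k _ _.
by rewrite /exp_coeff /= divr_ge0 // exprn_ge0.
Qed.

(* [poisson_pmf] is the junk value [1] at rate [0]; the m-fold convolution
   below needs the genuine rate-0 law as its base case. *)
Definition poisson_mass (r : R) (t : nat) : R := r ^+ t / t`!%:R * expR (- r).

Lemma poisson_mass_ge0 r t : 0 <= r -> 0 <= poisson_mass r t.
Proof. by move=> r_ge0; rewrite mulr_ge0 ?expR_ge0 // divr_ge0 // exprn_ge0. Qed.

Lemma poisson_pmfE r t : 0 < r -> poisson_pmf r t = poisson_mass r t.
Proof. by move=> r_gt0; rewrite /poisson_pmf r_gt0. Qed.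

Lemma poisson_mass_conv a b t :
  \sum_(j < t.+1) poisson_mass a j * poisson_mass b (t - j)
  = poisson_mass (a + b) t.
Proof.
rewrite /poisson_mass addrC exprDn opprD expRD !mulr_suml.
apply: eq_bigr => i _.
have le_it : (i <= t)%N by rewrite -ltnS.
have fact_neq0 k : (k`!%:R : R) != 0 by rewrite pnatr_eq0 -lt0n fact_gt0.
have bin_neq0 : ('C(t, i)%:R : R) != 0 by rewrite pnatr_eq0 -lt0n bin_gt0.
rewrite -(bin_fact le_it) !natrM mulr_natr.
by field; rewrite !fact_neq0 bin_neq0.
Qed.

Lemma poisson_partial_mgf_le (r z : R) N : 0 < r -> 0 <= z ->
  \sum_(a < N) poisson_pmf r a * z ^+ a <= expR (- r) * expR (r * z).
Proof.
move=> r_gt0 z_ge0.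
rewrite (eq_bigr (fun a : 'I_N => expR (- r) * ((r * z) ^+ a / a`!%:R))); last first.
  by move=> a _; rewrite poisson_pmfE // /poisson_mass exprMn; ring.
rewrite -mulr_sumr ler_pM2l ?expR_gt0 //.
by apply: expR_ge_partial_sum; rewrite mulr_ge0 // ltW.
Qed.

Lemma poisson_partial_sum_le1 (r : R) N : 0 < r -> \sum_(a < N) poisson_pmf r a <= 1.
Proof.
move=> r_gt0; have := poisson_partial_mgf_le N r_gt0 ler01.
rewrite mulr1 mulrC expRxMexpNx_1.
by under eq_bigr do rewrite expr1n mulr1.
Qed.

Lemma poisson_cdf_chernoff (r z : R) M : 0 < r -> 0 < z <= 1 ->
  \sum_(k < M.+1) poisson_pmf r k <= expR (- r) * expR (r * z) / z ^+ M.
Proof.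
move=> r_gt0 /andP[z_gt0 z_le1].
apply: (@le_trans _ _ (\sum_(k < M.+1) poisson_pmf r k * z ^+ k / z ^+ M)).
  apply: ler_sum => k _; rewrite -mulrA ler_peMr ?poisson_pmf_ge0 //.
  rewrite ler_pdivlMr ?exprn_gt0 // mul1r.
  have k_le_M : (k <= M)%N by rewrite -ltnS.
  exact: ler_wiXn2l (ltW z_gt0) z_le1 _ _ k_le_M.
rewrite -mulr_suml ler_wpM2r ?invr_ge0 ?exprn_ge0 ?(ltW z_gt0) //.
exact: poisson_partial_mgf_le M.+1 r_gt0 (ltW z_gt0).
Qed.

Section IidSums.
Variables (J : finType) (N : nat).

Lemma sum_ffun_prod_exp (c : nat -> R) (z : R) :
  \sum_(h : {ffun J -> 'I_N}) (\prod_j c (h j)) * z ^+ (\sum_j (h j : nat))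
  = (\sum_(a < N) c a * z ^+ a) ^+ #|J|.
Proof.
rewrite -prodr_const bigA_distr_bigA; apply: eq_bigr => h _.
by rewrite -prodrXr -big_split.
Qed.

Lemma poly_exp_ffun (c : nat -> R) :
  (\poly_(a < N) c a) ^+ #|J| =
  \sum_(h : {ffun J -> 'I_N}) (\prod_j c (h j)) *: 'X^(\sum_j (h j : nat)).
Proof.
rewrite poly_def -prodr_const bigA_distr_bigA; apply: eq_bigr => h _.
under eq_bigr do rewrite -mul_polyC.
by rewrite -mul_polyC big_split /= rmorph_prod prodrXr.
Qed.

Lemma sum_ffun_prod_ltn (c : nat -> R) M :
  \sum_(h : {ffun J -> 'I_N}) (\prod_j c (h j)) * ((\sum_j (h j : nat)) < M)%N%:R
  = \sum_(t < M) ((\poly_(a < N) c a) ^+ #|J|)`_t.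
Proof.
under [RHS]eq_bigr do rewrite poly_exp_ffun coef_sumMXn big_mkcond /=.
rewrite exchange_big /=; apply: eq_bigr => h _.
rewrite -big_mkcond /= (eq_bigl (fun t : 'I_M => (t : nat) == \sum_j (h j : nat))).
  rewrite (big_ord1_eq _ (fun _ => \prod_j c (h j))).
  by case: ifP; rewrite ?mulr1 ?mulr0.
by move=> t; rewrite eq_sym.
Qed.

Lemma sum_ffun_poisson_le1 (r : R) : 0 < r ->
  0 <= \sum_(h : {ffun J -> 'I_N}) \prod_j poisson_pmf r (h j) <= 1.
Proof.
move=> r_gt0; apply/andP; split.
  by apply: sumr_ge0 => h _; apply: prodr_ge0 => j _; exact: poisson_pmf_ge0.
have := sum_ffun_prod_exp (poisson_pmf r) 1.
under eq_bigr do rewrite expr1n mulr1.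
under [X in _ = X ^+ _ -> _]eq_bigr do rewrite expr1n mulr1.
move=> ->; apply: exprn_ile1; last exact: poisson_partial_sum_le1.
by apply: sumr_ge0 => a _; exact: poisson_pmf_ge0.
Qed.

Lemma sum_ffun_poisson_upper_tail (r z : R) M : 0 < r -> 1 <= z ->
  \sum_(h : {ffun J -> 'I_N})
     (\prod_j poisson_pmf r (h j)) * (M <= \sum_j (h j : nat))%N%:R
  <= (expR (- r) * expR (r * z)) ^+ #|J| / z ^+ M.
Proof.
move=> r_gt0 z_ge1; have z_gt0 : 0 < z by apply: lt_le_trans z_ge1.
have markov t : (M <= t)%N%:R <= z ^+ t / z ^+ M.
  case: leqP => [le_MS|_]; last by rewrite divr_ge0 // exprn_ge0 // ltW.
  by rewrite ler_pdivlMr ?exprn_gt0 // mul1r ler_weXn2l.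
apply: (@le_trans _ _ (\sum_(h : {ffun J -> 'I_N})
    (\prod_j poisson_pmf r (h j)) * z ^+ (\sum_j (h j : nat)) / z ^+ M)).
  apply: ler_sum => h _; rewrite -mulrA ler_wpM2l //.
  by apply: prodr_ge0 => j _; exact: poisson_pmf_ge0.
rewrite -mulr_suml sum_ffun_prod_exp ler_wpM2r ?invr_ge0 ?exprn_ge0 ?(ltW z_gt0) //.
apply: lerXn2r; rewrite ?nnegrE ?mulr_ge0 ?expR_ge0 //.
  by apply: sumr_ge0 => a _; rewrite mulr_ge0 ?poisson_pmf_ge0 ?exprn_ge0 ?(ltW z_gt0).
exact: poisson_partial_mgf_le N r_gt0 (ltW z_gt0).
Qed.

End IidSums.

(* The m-th power of a truncated generating function is a truncated m-fold
   convolution. *)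
Lemma truncated_poisson_exp_coef (r : R) N m t : 0 <= r ->
  0 <= ((\poly_(a < N) poisson_mass r a) ^+ m)`_t <= poisson_mass (m%:R * r) t.
Proof.
move=> r_ge0; elim: m t => [|m IHm] t.
  rewrite expr0 coef1 /poisson_mass mul0r expr0n oppr0 expR0 mulr1.
  by case: t => [|t] /=; rewrite ?divr1 ?ler01 ?mul0r ?lexx.
have coef_ge0 j : 0 <= (\poly_(a < N) poisson_mass r a)`_j.
  by rewrite coef_poly; case: ifP => // _; exact: poisson_mass_ge0.
have coef_le j : (\poly_(a < N) poisson_mass r a)`_j <= poisson_mass r j.
  by rewrite coef_poly; case: ifP => _; [exact: lexx | exact: poisson_mass_ge0].
rewrite exprS coefM -natr1 mulrDl mul1r addrC -poisson_mass_conv.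
apply/andP; split.
  by apply: sumr_ge0 => j _; rewrite mulr_ge0 //; case/andP: (IHm (t - j)%N).
apply: ler_sum => j _; apply: ler_pM => //; case/andP: (IHm (t - j)%N) => //.
Qed.

Lemma sum_ffun_poisson_lower_tail (J : finType) N M (r : R) : 0 < r -> (0 < #|J|)%N ->
  \sum_(h : {ffun J -> 'I_N})
     (\prod_j poisson_pmf r (h j)) * ((\sum_j (h j : nat)) < M)%N%:R
  <= \sum_(t < M) poisson_pmf (#|J|%:R * r) t.
Proof.
move=> r_gt0 J_gt0; rewrite sum_ffun_prod_ltn.
rewrite (@eq_poly _ N _ (poisson_mass r)); last by move=> i _; rewrite poisson_pmfE.
apply: ler_sum => t _; rewrite poisson_pmfE; last by rewrite mulr_gt0 // ltr0n.
by case/andP: (truncated_poisson_exp_coef N #|J| t (ltW r_gt0)).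
Qed.

End PoissonBounds.

Section BigProducts.
Variable R : numDomainType.

Lemma sum_ffun_prod_le (I J : finType) (F : I -> J -> R) (B : I -> R) :
  (forall i h, 0 <= F i h) -> (forall i, \sum_h F i h <= B i) ->
  \sum_(g : {ffun I -> J}) \prod_i F i (g i) <= \prod_i B i.
Proof.
move=> F_ge0 FB; rewrite -bigA_distr_bigA.
by apply: ler_prod => i _; rewrite FB sumr_ge0.
Qed.

Lemma prod_row (A B : finType) (a0 : A) (F : A * B -> R) :
  \prod_(p | p.1 == a0) F p = \prod_b F (a0, b).
Proof.
transitivity (\prod_(a | a == a0) \prod_b F (a, b)); last exact: big_pred1_eq.
by rewrite pair_big; apply: eq_big => [[a b]|[a b] _]; rewrite /= ?andbT.
Qed.

End BigProducts.

Section ThresholdError.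
Variable R : realType.

Lemma seq_threshE n K m (y : obs_space n K m) thr :
  seq_thresh y thr = [set i | [forall k, (stat y i k < thr)%N]]%SET.
Proof.
have foldE (s : seq 'I_K) (A : {set 'I_n}) :
    foldl (fun (S : {set 'I_n}) k => [set i in S | (stat y i k < thr)%N]%SET) A s
    = [set i in A | all (fun k => (stat y i k < thr)%N) s]%SET.
  elim: s A => [|k s IHs] A /=; first by apply/setP => i; rewrite !inE andbT.
  by rewrite IHs; apply/setP => i; rewrite !inE andbA.
rewrite /seq_thresh foldE; apply/setP => i; rewrite !inE /=.
apply/allP/forallP => [all_k k | all_k k _]; last exact: all_k.
by apply: all_k; rewrite mem_enum.
Qed.

Lemma seq_thresh_error_le n K m (S : {set 'I_n}) M (y : obs_space n K m) :
  (seq_thresh y M != S)%:R <=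
  \sum_(i in S) \sum_k (M <= stat y i k)%N%:R
  + \sum_(i in ~: S) \prod_k (stat y i k < M)%N%:R :> R.
Proof.
have sum1_ge0 : 0 <= \sum_(i in S) \sum_k (M <= stat y i k)%N%:R :> R.
  by do 2![apply: sumr_ge0 => ? _].
have sum2_ge0 : 0 <= \sum_(i in ~: S) \prod_k (stat y i k < M)%N%:R :> R.
  by apply: sumr_ge0 => i _; apply: prodr_ge0.
case: eqP => [_|neqS]; first by rewrite addr_ge0.
have [i] : exists i, (i \in seq_thresh y M) != (i \in S).
  apply/existsP; apply: contraT; rewrite negb_exists => /forallP eqS.
  by case: neqS; apply/setP => i; apply/eqP; move/negPn: (eqS i).
rewrite seq_threshE inE; case: (boolP (i \in S)) => iS /=.
  rewrite eqb_id negb_forall => /existsP[k]; rewrite -leqNgt => Mk.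
  rewrite -[leLHS]addr0 lerD // (bigD1 i) //= (bigD1 k) //= Mk.
  by rewrite -addrA ler_wpDr // addr_ge0 // sumr_ge0 // => *; apply: sumr_ge0.
rewrite eqbF_neg negbK => /forallP survives; rewrite -[leLHS]add0r lerD //.
rewrite (bigD1 i) ?inE //= big1 ?ler_wpDr //; last by move=> k _; rewrite survives.
by apply: sumr_ge0 => j _; apply: prodr_ge0.
Qed.

Definition box_obs (I J : finType) N (g : {ffun I -> {ffun J -> 'I_N}}) :
  {ffun I * J -> nat} := [ffun t => (g t.1 t.2 : nat)].

(* Every finite set of observations lies in a box [0, N]^(I * J), so bounds on
   the (finite, factorizable) sums over boxes bound the [esum]. *)
Lemma esum_le_box (I J : finType) (P : pred {ffun I * J -> nat})
  (f : {ffun I * J -> nat} -> R) (B : R) :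
  (forall y, 0 <= f y) ->
  (forall N, \sum_(g : {ffun I -> {ffun J -> 'I_N.+1}})
               f (box_obs g) * (P (box_obs g))%:R <= B) ->
  (\esum_(y in [set y | P y]) (f y)%:E <= B%:E)%E.
Proof.
move=> f_ge0 box_le.
apply: ge_ereal_sup => _ [X [finX XP] <-].
rewrite fsbig_finite //= sumEFin lee_fin.
pose s := finmap.enum_fset (fset_set X).
have s_uniq : uniq s by exact: finmap.fset_uniq.
change (\sum_(y <- s) f y <= B).
have sP y : y \in s -> P y by rewrite in_fset_set // inE => /XP.
pose N := (\max_(y <- s) \max_(t : I * J) y t)%N.
pose unbox (y : {ffun I * J -> nat}) : {ffun I -> {ffun J -> 'I_N.+1}} :=
  [ffun a => [ffun b => inord (y (a, b))]].
have unboxK : {in s, cancel unbox (@box_obs I J N.+1)}.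
  move=> y ys; apply/ffunP => -[a b]; rewrite !ffunE /= inordK // ltnS.
  exact: leq_trans (leq_bigmax (a, b)) (leq_bigmax_seq _ ys _).
have -> : \sum_(y <- s) f y = \sum_(g <- map unbox s) f (box_obs g).
  by rewrite big_map; apply: eq_big_seq => y ys; rewrite unboxK.
have unbox_uniq : uniq (map unbox s).
  rewrite map_inj_in_uniq // => y1 y2 y1s y2s eq_y.
  by rewrite -(unboxK y1) // -(unboxK y2) // eq_y.
rewrite big_uniq // (le_trans _ (box_le N)) // [leRHS]big_mkcond /= big_mkcond /=.
apply: ler_sum => g _; case: ifP => [/mapP[y ys ->]|_]; last by rewrite mulr_ge0.
by rewrite unboxK // sP // mulr1.
Qed.

Definition block_weight n (th0 th1 : R) (S : {set 'I_n}) m N (i : 'I_n)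
  (h : {ffun 'I_m -> 'I_N}) : R :=
  \prod_j poisson_pmf (comp_rate th0 th1 S i) (h j).

Lemma block_weight_ge0 n th0 th1 S m N i h : 0 <= @block_weight n th0 th1 S m N i h.
Proof. by apply: prodr_ge0 => j _; exact: poisson_pmf_ge0. Qed.

Lemma sum_block_weight_le1 n th0 th1 S m N i : 0 < th0 -> 0 < th1 ->
  \sum_h @block_weight n th0 th1 S m N i h <= 1.
Proof.
move=> th0_gt0 th1_gt0; rewrite /block_weight /comp_rate.
by case: ifP => _; [case/andP: (sum_ffun_poisson_le1 'I_m N th1_gt0)
                   | case/andP: (sum_ffun_poisson_le1 'I_m N th0_gt0)].
Qed.

Lemma obs_pmf_ge0 n K m (th0 th1 : R) S (y : obs_space n K m) :
  0 <= obs_pmf th0 th1 S y.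
Proof. by apply: prodr_ge0 => t _; exact: poisson_pmf_ge0. Qed.

Section Box.
Variables (n K m N : nat) (th0 th1 : R) (S : {set 'I_n}).
Local Notation box := {ffun 'I_n * 'I_K -> {ffun 'I_m -> 'I_N}}.
Implicit Type g : box.

Lemma obs_pmf_box g :
  obs_pmf th0 th1 S (box_obs g) = \prod_b block_weight th0 th1 S b.1 (g b).
Proof.
rewrite /obs_pmf /block_weight pair_bigA.
by apply: eq_bigr => -[b j] _; rewrite ffunE.
Qed.

Lemma stat_box g i k : stat (box_obs g) i k = (\sum_j (g (i, k) j : nat))%N.
Proof. by apply: eq_bigr => j _; rewrite ffunE. Qed.

Hypotheses (th0_gt0 : 0 < th0) (th1_gt0 : 0 < th1).

Lemma box_missed_le M (z : R) i (k : 'I_K) : 1 <= z -> i \in S ->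
  \sum_(g : box) obs_pmf th0 th1 S (box_obs g) * (M <= stat (box_obs g) i k)%N%:R
  <= (expR (- th1) * expR (th1 * z)) ^+ m / z ^+ M.
Proof.
move=> z_ge1 iS; set Q := (expR (- th1) * _) ^+ m / _.
pose tail (h : {ffun 'I_m -> 'I_N}) : R := (M <= \sum_j (h j : nat))%N%:R.
pose F b h := block_weight th0 th1 S b.1 h * (if b == (i, k) then tail h else 1).
have summandE g : obs_pmf th0 th1 S (box_obs g) * (M <= stat (box_obs g) i k)%N%:R
                  = \prod_b F b (g b).
  by rewrite big_split /= -big_mkcond big_pred1_eq obs_pmf_box stat_box.
under eq_bigr do rewrite summandE.
apply: le_trans (sum_ffun_prod_le (B := fun b => if b == (i, k) then Q else 1) _ _) _.
- by move=> b h; rewrite mulr_ge0 ?block_weight_ge0 //; case: ifP.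
- move=> b; rewrite /F; case: eqP => [->|_] /=; under eq_bigr do rewrite ?mulr1.
    rewrite /block_weight /comp_rate iS.
    by have := sum_ffun_poisson_upper_tail 'I_m N M th1_gt0 z_ge1; rewrite card_ord.
  exact: sum_block_weight_le1.
- by rewrite -big_mkcond big_pred1_eq.
Qed.

Lemma box_survive_le M i : (0 < m)%N -> i \notin S ->
  \sum_(t < M) poisson_pmf (m%:R * th0) t <= 1 / 2 ->
  \sum_(g : box) obs_pmf th0 th1 S (box_obs g) * \prod_k (stat (box_obs g) i k < M)%N%:R
  <= (1 / 2) ^+ K.
Proof.
move=> m_gt0 iNS median.
pose low (h : {ffun 'I_m -> 'I_N}) : R := (\sum_j (h j : nat) < M)%N%:R.
pose F (b : 'I_n * 'I_K) h :=
  block_weight th0 th1 S b.1 h * (if b.1 == i then low h else 1).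
have summandE g :
    obs_pmf th0 th1 S (box_obs g) * \prod_k (stat (box_obs g) i k < M)%N%:R
    = \prod_b F b (g b).
  rewrite big_split /= -big_mkcond prod_row obs_pmf_box.
  by congr (_ * _); apply: eq_bigr => k _; rewrite stat_box.
under eq_bigr do rewrite summandE.
apply: le_trans (sum_ffun_prod_le (B := fun b => if b.1 == i then 1 / 2 else 1) _ _) _.
- by move=> b h; rewrite mulr_ge0 ?block_weight_ge0 //; case: ifP.
- move=> b; rewrite /F; case: eqP => [->|_] /=; under eq_bigr do rewrite ?mulr1.
    rewrite /block_weight /comp_rate (negPf iNS); apply: le_trans median.
    have card_gt0 : (0 < #|'I_m|)%N by rewrite card_ord.
    by have := sum_ffun_poisson_lower_tail N M th0_gt0 card_gt0; rewrite card_ord.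
  exact: sum_block_weight_le1.
- by rewrite -big_mkcond prod_row prodr_const card_ord.
Qed.

Lemma box_error_le M (z : R) : (0 < m)%N -> 1 <= z ->
  \sum_(t < M) poisson_pmf (m%:R * th0) t <= 1 / 2 ->
  \sum_(g : box) obs_pmf th0 th1 S (box_obs g) * (seq_thresh (box_obs g) M != S)%:R
  <= #|S|%:R * (K%:R * ((expR (- th1) * expR (th1 * z)) ^+ m / z ^+ M))
     + n%:R * (1 / 2) ^+ K.
Proof.
move=> m_gt0 z_ge1 median; set Q := (expR (- th1) * _) ^+ m / _.
apply: (@le_trans _ _ (\sum_(i in S) \sum_(k < K) Q + \sum_(i in ~: S) (1 / 2) ^+ K));
  last first.
  have -> : \sum_(i in S) \sum_(k < K) Q = #|S|%:R * (K%:R * Q).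
    by rewrite !sumr_const card_ord !mulr_natl.
  rewrite lerD // sumr_const -[X in X <= _]mulr_natl ler_wpM2r ?exprn_ge0 //.
  by rewrite ler_nat -[X in (_ <= X)%N]card_ord max_card.
apply: (@le_trans _ _ (\sum_(g : box) obs_pmf th0 th1 S (box_obs g) *
  (\sum_(i in S) \sum_k (M <= stat (box_obs g) i k)%N%:R
   + \sum_(i in ~: S) \prod_k (stat (box_obs g) i k < M)%N%:R))).
  by apply: ler_sum => g _; rewrite ler_wpM2l ?obs_pmf_ge0 ?seq_thresh_error_le.
under eq_bigr do rewrite mulrDr !mulr_sumr.
rewrite big_split /= lerD //.
  rewrite exchange_big; apply: ler_sum => i iS.
  under eq_bigr do rewrite mulr_sumr.
  by rewrite exchange_big; apply: ler_sum => k _; apply (box_missed_le M k z_ge1 iS).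
rewrite exchange_big; apply: ler_sum => i; rewrite inE => iNS.
exact: box_survive_le m_gt0 iNS median.
Qed.

End Box.

Lemma error_prob_le n K m (th0 th1 : R) (S : {set 'I_n}) M (z : R) :
  0 < th0 -> 0 < th1 -> (0 < m)%N -> 1 <= z ->
  \sum_(t < M) poisson_pmf (m%:R * th0) t <= 1 / 2 ->
  (error_prob K m th0 th1 S M <=
   (#|S|%:R * (K%:R * ((expR (- th1) * expR (th1 * z)) ^+ m / z ^+ M))
     + n%:R * (1 / 2) ^+ K)%:E)%E.
Proof.
move=> th0_gt0 th1_gt0 m_gt0 z_ge1 median.
apply: esum_le_box => [y|N]; first exact: obs_pmf_ge0.
exact: box_error_le.
Qed.

End ThresholdError.

Section Asymptotics.
Variable R : realType.

Lemma log2_ge1 n : (2 <= n)%N -> 1 <= log2 (n%:R : R).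
Proof.
move=> n_ge2; rewrite /log2 ler_pdivlMr ?mul1r ?ln_gt0 ?ltr1n //.
by rewrite ler_ln ?posrE ?ltr0n ?ler_nat // (leq_trans _ n_ge2).
Qed.

Lemma passes_bounds (eps : R) n : 0 < eps -> (2 <= n)%N ->
  (1 + eps) * log2 (n%:R : R) <= (passes eps n)%:R <= (2 + eps) * log2 (n%:R : R).
Proof.
move=> eps_gt0 n_ge2; have L_ge1 := log2_ge1 n_ge2.
set x := (1 + eps) * _.
have x_ge0 : 0 <= x by rewrite mulr_ge0 //; lra.
have ceil_ge0 : 0 <= Num.ceil x by rewrite ceil_ge0 // (lt_le_trans _ x_ge0) // ltrN10.
rewrite /passes natr_absz ger0_norm // ceil_ge /=.
have := ceilB1_lt x; rewrite intrD /= ltrBlDr => /ltW ceil_lt.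
apply: le_trans ceil_lt _; rewrite /x; lra.
Qed.

Lemma poisson_median_tail (r : R) M : 0 < r -> is_poisson_median r M ->
  expR (- (3 * M%:R)) <= 8 * expR (- (3 / 2 * r)).
Proof.
move=> r_gt0 [median _].
have e1_le_half : expR (-1) <= 1 / 2 :> R.
  rewrite expRN div1r lef_pV2 ?posrE ?expR_gt0 //; have := expR_ge1Dx (1 : R); lra.
have e1_in01 : 0 < expR (-1 : R) <= 1.
  by apply/andP; split; [exact: expR_gt0 | lra].
have half_le : 1 / 2 <= expR (M%:R - r / 2).
  apply: le_trans median (le_trans (poisson_cdf_chernoff M r_gt0 e1_in01) _).
  rewrite -expRM_natl -expRN -!expRD ler_expR; nra.
have eM_le : expR (- M%:R) <= 2 * expR (- (r / 2)).
  apply: (@le_trans _ _ (expR (- M%:R) * (2 * expR (M%:R - r / 2)))).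
    by rewrite ler_peMr ?expR_ge0 //; lra.
  by rewrite mulrCA -expRD addrA addNr add0r.
have := lerXn2r 3 (expR_ge0 _) (mulr_ge0 (ler0n _ 2) (expR_ge0 _)) eM_le.
rewrite exprMn -!expRM_natl.
have -> : (2 : R) ^+ 3 = 8 by rewrite !exprS expr0; lra.
have -> : 3%:R * - (r / 2) = - (3 / 2 * r) :> R by field.
by rewrite mulrN.
Qed.

Lemma survivor_term_le (eps : R) n K : (2 <= n)%N ->
  (1 + eps) * log2 (n%:R : R) <= K%:R ->
  n%:R * (1 / 2) ^+ K <= expR (- (eps * ln (n%:R : R))).
Proof.
move=> n_ge2 K_ge.
have ln2_gt0 : 0 < ln (2 : R) by rewrite ln_gt0 // ltr1n.
have n_gt0 : 0 < (n%:R : R) by rewrite ltr0n (leq_trans _ n_ge2).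
have -> : (1 / 2 : R) = expR (- ln 2) by rewrite expRN lnK ?posrE // div1r.
rewrite -expRM_natl -{1}(lnK n_gt0) -expRD ler_expR.
by move: K_ge; rewrite /log2 mulrA ler_pdivrMr //; nra.
Qed.

Lemma missed_term_le (eps C L r : R) (s K M : nat) : 0 < eps -> 0 <= C -> 1 <= L ->
  K%:R <= (2 + eps) * L ->
  expR (- (3 * M%:R)) <= 8 * expR (- (3 / 2 * r)) ->
  ((0 < s)%N -> ln (s%:R * L) < r) ->
  s%:R * (K%:R * (C / expR 3 ^+ M)) <= 8 * C * (2 + eps) * expR (- (1 / 2 * ln L)).
Proof.
move=> eps_gt0 C_ge0 L_ge1 K_le tail r_gt.
have L_gt0 : 0 < L by apply: lt_le_trans L_ge1.
have bound_ge0 : 0 <= 8 * C * (2 + eps) by rewrite !mulr_ge0 //; lra.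
have [->|s_gt0] := posnP s; first by rewrite mul0r mulr_ge0 ?expR_ge0.
set x := s%:R * L.
have x_gt0 : 0 < x by rewrite mulr_gt0 // ltr0n.
have L_le_x : L <= x by rewrite ler_peMl ?ler1n // ltW.
have tail_x : expR (- (3 * M%:R)) <= 8 * expR (- (3 / 2 * ln x)).
  by apply: le_trans tail _; rewrite ler_pM2l // ler_expR; have := r_gt s_gt0; lra.
have x_tail : x * expR (- (3 / 2 * ln x)) = expR (- (1 / 2 * ln x)).
  by rewrite -{1}(lnK x_gt0) -expRD; congr expR; lra.
apply: (@le_trans _ _ (8 * C * (2 + eps) * (x * expR (- (3 / 2 * ln x))))); last first.
  by rewrite x_tail ler_wpM2l // ler_expR lerN2 ler_pM2l // ler_ln ?posrE.
apply: (@le_trans _ _ (s%:R * ((2 + eps) * L * (C * (8 * expR (- (3 / 2 * ln x))))))).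
  rewrite ler_wpM2l // ler_pM ?mulr_ge0 ?expR_ge0 // ler_wpM2l //.
  by rewrite -expRM_natl -expRN mulrC.
by rewrite /x; lra.
Qed.

Lemma cvgry_scaled_ln (u : nat -> R) (c : R) : 0 < c -> u @ \oo --> +oo ->
  (fun n => c * ln (u n)) @ \oo --> +oo.
Proof.
move=> c_gt0 /cvgryPge u_oo; apply/cvgryPge => A.
apply: filterS (u_oo (expR (A / c))) => n u_ge.
have u_gt0 : 0 < u n by apply: lt_le_trans u_ge; exact: expR_gt0.
rewrite -ler_pdivrMl // mulrC.
by rewrite -[X in X <= _](expRK (A / c)) ler_ln ?posrE ?expR_gt0.
Qed.

Lemma error_bound_cvg0 (eps C : R) : 0 < eps ->
  (fun n : nat => C * expR (- (1 / 2 * ln (log2 (n%:R : R))))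
                  + expR (- (eps * ln (n%:R : R)))) @ \oo --> 0.
Proof.
move=> eps_gt0.
have log2_oo : (fun n : nat => log2 (n%:R : R)) @ \oo --> +oo.
  have -> : (fun n : nat => log2 (n%:R : R))
            = (fun n => (ln (2 : R))^-1 * ln (n%:R : R)).
    by apply/funext => n; rewrite /log2 mulrC.
  by apply: cvgry_scaled_ln cvgr_idn; rewrite invr_gt0 ln_gt0 // ltr1n.
have half_gt0 : 0 < 1 / 2 :> R by lra.
rewrite -[0]addr0 -[X in X + 0](mulr0 C); apply: cvgD.
  apply: cvgMl_tmp.
  exact: cvg_comp (cvgry_scaled_ln half_gt0 log2_oo) (@cvgr_expR R).
exact: cvg_comp (cvgry_scaled_ln eps_gt0 cvgr_idn) (@cvgr_expR R).
Qed.

End Asymptotics.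

Unset Implicit Arguments.

Theorem corollary6 (R : realType) (m : nat) (th1 eps : R) (th0 : nat -> R)
  (s : nat -> nat) (S : forall n : nat, {set 'I_n}) (M : nat -> nat) :
  (0 < m)%N -> 0 < th1 -> 0 < eps ->
  (forall n, #|S n| = s n) ->
  (forall n, th1 < th0 n) ->
  (forall n, is_poisson_median (m%:R * th0 n) (M n)) ->
  (\forall n \near \oo, (ln ((s n)%:R * log2 (n%:R : R)) + 1) / m%:R < th0 n) ->
  (fun n => @error_prob R n (passes eps n) m (th0 n) th1 (S n) (M n))
    @ \oo --> 0%E.
Proof.
move=> m_gt0 th1_gt0 eps_gt0 card_S th1_lt median rate_large.
have e3_ge1 : 1 <= expR 3 :> R by have := expR_ge1Dx (3 : R); lra.
pose C := (expR (- th1) * expR (th1 * expR 3)) ^+ m.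
have C_ge0 : 0 <= C by rewrite exprn_ge0 // mulr_ge0 ?expR_ge0.
pose bound n := 8 * C * (2 + eps) * expR (- (1 / 2 * ln (log2 (n%:R : R))))
                + expR (- (eps * ln (n%:R : R))).
apply: (@squeeze_cvge _ _ _ _ (fun=> 0%E) _ (fun n => (bound n)%:E));
  last 2 first.
- exact: cvg_cst.
- by apply: cvg_EFin; [exact: nearW | exact: error_bound_cvg0].
apply: filterS2 (nbhs_infty_ge 2) rate_large => n n_ge2 rate_n.
rewrite esum_ge0 /=; last by move=> y _; rewrite lee_fin obs_pmf_ge0.
have th0_gt0 : 0 < th0 n by apply: lt_trans (th1_lt n).
have [_ upper_med] := median n.
have cdf_lt_half : \sum_(t < M n) poisson_pmf (m%:R * th0 n) t <= 1 / 2 by lra.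
apply: le_trans (error_prob_le (passes eps n) (S n) th0_gt0 th1_gt0 m_gt0 e3_ge1
  cdf_lt_half) _.
have /andP[K_ge K_le] := passes_bounds eps_gt0 n_ge2.
rewrite lee_fin lerD ?survivor_term_le //.
have mth0_gt0 : 0 < m%:R * th0 n by rewrite mulr_gt0 ?ltr0n.
apply: missed_term_le eps_gt0 C_ge0 (log2_ge1 R n_ge2) K_le
  (poisson_median_tail mth0_gt0 (median n)) _ => _.
by rewrite card_S; move: rate_n; rewrite ltr_pdivrMr ?ltr0n // [th0 n * _]mulrC; lra.
Qed.
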